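(* Let $S$ be a quasi-thin scheme on $X$, $\mathbb F$ a field and $x\in X$. Then for every $y\in X$, the Terwilliger $\mathbb F$-algebra $\mathcal T(y)$ of $S$ with respect to $y$ is isomorphic to $\mathcal T(x)$ as $\mathbb F$-algebras.
   Context: Let $X$ be a nonempty finite set. A scheme of class $d$ on $X$ is a partition $S=\{R_0,\dots,R_d\}$ of $X\times X$ into nonempty sets such that $R_0=\{(b,b):b\in X\}$; for each $c$ there is $c'$ with $R_{c'}=\{(f,e):(e,f)\in R_c\}$; and for all $i,j,k$ the intersection number $p_{ij}^k=|\{\ell\in X:(m,\ell)\in R_i,(\ell,n)\in R_j\}|$ does not depend on $(m,n)\in R_k$. The valency of $R_a$ is $k_a=p_{aa'}^0$; $S$ is quasi-thin if all $k_a\le 2$. For $y\in X$, $yR_a=\{z:(y,z)\in R_a\}$. $A_a\in M_X(\mathbb F)$ is the $(0,1)$ adjacency matrix of $R_a$ and $E_a^*(y)$ is the diagonal $(0,1)$-matrix with ones exactly at positions indexed by $yR_a$. The Terwilliger $\mathbb F$-algebra $\mathcal T(y)$ is the $\mathbb F$-subalgebra of $M_X(\mathbb F)$ generated by $A_0,\dots,A_d,E_0^*(y),\dots,E_d^*(y)$. *)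

From mathcomp Require Import all_boot all_order all_algebra.
Set Implicit Arguments. Unset Strict Implicit. Unset Printing Implicit Defensive.
Import GRing.Theory.
Local Open Scope ring_scope.

(* A scheme of class d on the finite set X is encoded by the function
   rel : X -> X -> 'I_d.+1 with rel m n = c  iff  (m,n) \in R_c. *)
Section Scheme.
Variables (X : finType) (d : nat) (rel : X -> X -> 'I_d.+1).

Definition pcount (i j : 'I_d.+1) (m n : X) : nat :=
  #|[set l | (rel m l == i) && (rel l n == j)]|.

Definition is_transpose (c c' : 'I_d.+1) : Prop :=
  forall e f : X, (rel f e == c') = (rel e f == c).

Definition is_scheme : Prop :=
  [/\ (forall c : 'I_d.+1, exists m n, rel m n = c),
      (forall m n : X, (rel m n == ord0) = (m == n)),
      (forall c : 'I_d.+1, exists c', is_transpose c c') &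
      (forall (i j k : 'I_d.+1) (m n m' n' : X),
          rel m n = k -> rel m' n' = k -> pcount i j m n = pcount i j m' n')].

Definition transp (c : 'I_d.+1) : 'I_d.+1 :=
  odflt ord0 [pick c' | [forall e, forall f, (rel f e == c') == (rel e f == c)]].

(* valency k_a = p_{a a'}^0, evaluated at any pair of R_0 *)
Definition valency (x0 : X) (a : 'I_d.+1) : nat := pcount a (transp a) x0 x0.

Definition quasi_thin (x0 : X) : Prop := forall a : 'I_d.+1, (valency x0 a <= 2)%N.

Variable F : fieldType.
Local Notation M := 'M[F]_#|X|.

Definition adjmx (a : 'I_d.+1) : M :=
  \matrix_(i, j) ((rel (enum_val i) (enum_val j) == a)%:R).

Definition dualidem (y : X) (a : 'I_d.+1) : M :=
  \matrix_(i, j) (((i == j) && (rel y (enum_val j) == a))%:R).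

Definition terw_gens (y : X) (A : M) : Prop :=
  exists a : 'I_d.+1, A = adjmx a \/ A = dualidem y a.

End Scheme.

Inductive gen_alg (F : fieldType) (n : nat) (G : 'M[F]_n -> Prop) : 'M[F]_n -> Prop :=
| ga_gen A : G A -> gen_alg G A
| ga_one : gen_alg G 1%:M
| ga_add A B : gen_alg G A -> gen_alg G B -> gen_alg G (A + B)
| ga_scale (c : F) A : gen_alg G A -> gen_alg G (c *: A)
| ga_mul A B : gen_alg G A -> gen_alg G B -> gen_alg G (A *m B).

Definition terwilliger (X : finType) (d : nat) (rel : X -> X -> 'I_d.+1)
  (F : fieldType) (y : X) : 'M[F]_#|X| -> Prop :=
  gen_alg (@terw_gens X d rel F y).

Definition alg_iso (F : fieldType) (n : nat) (S1 S2 : 'M[F]_n -> Prop) : Prop :=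
  exists f : 'M[F]_n -> 'M[F]_n,
    (forall A, S1 A -> S2 (f A)) /\
    (forall A B, S1 A -> S1 B -> f (A + B) = f A + f B) /\
    (forall (c : F) A, S1 A -> f (c *: A) = c *: f A) /\
    (forall A B, S1 A -> S1 B -> f (A *m B) = f A *m f B) /\
    f 1%:M = 1%:M /\
    (forall A B, S1 A -> S1 B -> f A = f B -> A = B) /\
    (forall B, S2 B -> exists2 A, S1 A & f A = B).
Arguments terwilliger {X d} rel F y _.

From mathcomp Require Import all_boot all_order all_algebra all_fingroup.
Set Implicit Arguments. Unset Strict Implicit. Unset Printing Implicit Defensive.
Import GRing.Theory.
Local Open Scope ring_scope.

(* Since |xR_a| = k_a = |yR_a| for every a, some permutation r of X maps each xR_a onto yR_a.
   Conjugation by its permutation matrix is an automorphism of M_X(F) sending E_a*(y) to E_a*(x)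
   and A_b to the adjacency matrix B of the relabelled relation {(u, v) | (r u, r v) in R_b}.
   On xR_a x xR_c the 0/1 blocks of B and of A_b have the same row and column sums, because both
   are intersection numbers of S.  By quasi-thinness these blocks are at most 2 x 2, and two such
   0/1 matrices with equal margins are equal or complementary.  Hence E_a*(x) B E_c*(x) is
   E_a*(x) A_b E_c*(x) or E_a*(x) (J - A_b) E_c*(x), so B lies in T(x); symmetrically the
   inverse conjugation maps T(x) into T(y). *)

Lemma disagree_on_card_le2 (T : finType) (C : {set T}) (p q : pred T) v0 :
  (#|C| <= 2)%N -> #|[set v in C | p v]| = #|[set v in C | q v]| ->
  v0 \in C -> p v0 != q v0 -> {in C, forall v, p v != q v}.
Proof.
move=> C_le2 eq_pq Cv0 pq_v0 v Cv; have [-> //|v_neq] := eqVneq v v0.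
have C_pair : C = [set v0; v].
  apply/esym/eqP; rewrite eqEcard cards2 eq_sym v_neq C_le2 andbT.
  by apply/subsetP => w; rewrite !inE => /orP[] /eqP->.
have card_sep (P : pred T) : #|[set w in C | P w]| = (P v0 + P v)%N.
  rewrite -sum1dep_card big_mkcondr C_pair big_setU1 ?inE 1?eq_sym //=.
  by rewrite big_set1; case: (P v0); case: (P v).
move: eq_pq pq_v0; rewrite !card_sep.
by case: (p v0); case: (q v0); case: (p v); case: (q v).
Qed.

Lemma agree_or_complement_card_le2 (T : finType) (A C : {set T}) (n m : rel T) :
  (#|A| <= 2)%N -> (#|C| <= 2)%N ->
  {in A, forall u, #|[set v in C | n u v]| = #|[set v in C | m u v]|} ->
  {in C, forall v, #|[set u in A | n u v]| = #|[set u in A | m u v]|} ->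
  {in A & C, forall u v, m u v = n u v} \/ {in A & C, forall u v, m u v = ~~ n u v}.
Proof.
move=> A_le2 C_le2 rows cols.
have [/existsP[u0 /andP[Au0 /existsP[v0 /andP[Cv0 mn0]]]]|/existsPn agree] :=
  boolP [exists u in A, exists v in C, m u v != n u v]; last first.
  left=> u v Au Cv; move: (agree u); rewrite Au => /existsPn/(_ v).
  by rewrite Cv negbK => /eqP.
right=> u v Au Cv.
have row_u0 : {in C, forall w, n u0 w != m u0 w}.
  by apply: (disagree_on_card_le2 C_le2 (rows u0 Au0) Cv0); rewrite eq_sym.
have /(_ u Au) : {in A, forall w, n w v != m w v}.
  exact: (disagree_on_card_le2 A_le2 (cols v Cv) Au0 (row_u0 v Cv)).
by case: (m u v); case: (n u v).
Qed.

Lemma perm_fibers (X : finType) (T : eqType) (f g : X -> T) :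
  (forall a, #|[set v | f v == a]| = #|[set v | g v == a]|) ->
  exists s : 'S_#|X|, forall i, g (enum_val (s i)) = f (enum_val i).
Proof.
move=> fibers; have size_g : size (map g (enum X)) == #|X| by rewrite size_map cardE.
have /tuple_permP[s fgs] : perm_eq (map f (enum X)) (Tuple size_g).
  apply/allP => a _ /=; rewrite !count_map -!size_filter.
  by apply/eqP; have := fibers a; rewrite !cardsE !cardE.
exists s => i; have x := enum_val i.
move/(congr1 (nth (f x) ^~ i)): fgs; rewrite (nth_map x) -?cardE // -enum_val_nth => ->.
rewrite (nth_map i) ?size_enum_ord // nth_ord_enum (tnth_nth (g x)) /=.
by rewrite (nth_map x) -?cardE // -enum_val_nth.
Qed.

Section PermConjugation.
Variables (F : fieldType) (n : nat).
Implicit Types (A B : 'M[F]_n) (s : 'S_n).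

Definition perm_conjmx s A := perm_mx s *m A *m perm_mx s^-1.

Lemma perm_conjmxE s A i j : perm_conjmx s A i j = A (s i) (s j).
Proof. by rewrite /perm_conjmx -row_permE -col_permE !mxE. Qed.

Lemma perm_conjmxD s : {morph perm_conjmx s : A B / A + B}.
Proof. by move=> A B; rewrite /perm_conjmx mulmxDr mulmxDl. Qed.

Lemma perm_conjmxZ s c : {morph perm_conjmx s : A / c *: A}.
Proof. by move=> A; rewrite /perm_conjmx -scalemxAr -scalemxAl. Qed.

Lemma perm_mxVK s : perm_mx s^-1 *m perm_mx s = 1%:M :> 'M[F]_n.
Proof. by rewrite -perm_mxM mulVg perm_mx1. Qed.

Lemma perm_conjmxM s : {morph perm_conjmx s : A B / A *m B}.
Proof.
move=> A B; rewrite /perm_conjmx !mulmxA -[_ *m perm_mx s^-1 *m perm_mx s]mulmxA.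
by rewrite perm_mxVK mulmx1.
Qed.

Lemma perm_conjmx1 s : perm_conjmx s 1%:M = 1%:M.
Proof. by rewrite /perm_conjmx mulmx1 -perm_mxM mulgV perm_mx1. Qed.

Lemma perm_conjmxK s : cancel (perm_conjmx s) (perm_conjmx s^-1).
Proof. by move=> A; apply/matrixP => i j; rewrite !perm_conjmxE !permKV. Qed.

Lemma perm_conjmxVK s : cancel (perm_conjmx s^-1) (perm_conjmx s).
Proof. by move=> A; apply/matrixP => i j; rewrite !perm_conjmxE !permK. Qed.

Lemma alg_iso_perm_conjmx (S1 S2 : 'M[F]_n -> Prop) s :
  (forall A, S1 A -> S2 (perm_conjmx s A)) -> (forall B, S2 B -> S1 (perm_conjmx s^-1 B)) ->
  alg_iso S1 S2.
Proof.
move=> S12 S21; exists (perm_conjmx s); split; first exact: S12.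
do ![split] => [A B _ _|c A _|A B _ _||A B _ _ /(congr1 (perm_conjmx s^-1))|B S2B].
- exact: perm_conjmxD.
- exact: perm_conjmxZ.
- exact: perm_conjmxM.
- exact: perm_conjmx1.
- by rewrite !perm_conjmxK.
- by exists (perm_conjmx s^-1 B); [exact: S21 | exact: perm_conjmxVK].
Qed.

End PermConjugation.

Section GeneratedAlgebra.
Variables (F : fieldType) (n : nat).
Implicit Types (G H : 'M[F]_n -> Prop) (s : 'S_n).

Lemma gen_alg0 G : gen_alg G 0.
Proof. by rewrite -(scale0r 1%:M); apply/ga_scale/ga_one. Qed.

Lemma gen_alg_sum G (I : finType) (B : I -> 'M[F]_n) :
  (forall i, gen_alg G (B i)) -> gen_alg G (\sum_i B i).
Proof. by move=> GB; apply: big_ind => //; [exact: gen_alg0 | exact: ga_add]. Qed.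

Lemma gen_alg_perm_conjmx G H s :
  (forall A, G A -> gen_alg H (perm_conjmx s A)) ->
  forall A, gen_alg G A -> gen_alg H (perm_conjmx s A).
Proof.
move=> GH A; elim=> {A} [A /GH //|||c A _|A B _ GA _ GB].
- by rewrite perm_conjmx1; apply: ga_one.
- by move=> A B _ GA _ GB; rewrite perm_conjmxD; apply: ga_add.
- by rewrite perm_conjmxZ; apply: ga_scale.
- by rewrite perm_conjmxM; apply: ga_mul.
Qed.

End GeneratedAlgebra.

Section Scheme.
Variables (X : finType) (d : nat) (rel : X -> X -> 'I_d.+1).
Hypothesis rel_scheme : is_scheme rel.

Definition fiber (z : X) (a : 'I_d.+1) : {set X} := [set v | rel z v == a].

Lemma rel_transp c e f : (rel f e == transp rel c) = (rel e f == c).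
Proof.
have [_ _ has_transp _] := rel_scheme; rewrite /transp; case: pickP.
  by move=> c' /forallP /(_ e) /forallP /(_ f) /eqP.
move=> no_transp; have [c' c'_transp] := has_transp c.
move: (no_transp c') => /negbT /forallPn [e' /forallPn [f']].
by rewrite c'_transp eqxx.
Qed.

Lemma transp_rel e f : rel f e = transp rel (rel e f).
Proof. by apply/eqP; rewrite rel_transp. Qed.

Lemma pcount_eq i j m n m' n' :
  rel m n = rel m' n' -> pcount rel i j m n = pcount rel i j m' n'.
Proof. by case: rel_scheme => _ _ _ pcount_const mn; apply: pcount_const mn _. Qed.

Lemma card_fiber x0 z a : #|fiber z a| = valency rel x0 a.
Proof.
have [_ rel0 _ _] := rel_scheme.
have rel_diag w : rel w w = ord0 by apply/eqP; rewrite rel0.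
rewrite /valency (@pcount_eq _ _ x0 x0 z z) ?rel_diag //.
by apply: eq_card => v; rewrite !inE rel_transp andbb.
Qed.

Lemma quasi_thin_fiber x0 z a :
  quasi_thin rel x0 -> (#|fiber z a| <= 2)%N.
Proof. by rewrite (card_fiber x0). Qed.

Section Relabeling.
Variables (x y : X) (r : X -> X).
Hypotheses (r_inj : injective r) (rel_r : forall v, rel y (r v) = rel x v).

Lemma card_row_relabel u b c :
  #|[set v in fiber x c | rel u v == b]| =
  #|[set v in fiber x c | rel (r u) (r v) == b]|.
Proof.
transitivity (pcount rel b (transp rel c) u x).
  by apply: eq_card => v; rewrite !inE rel_transp andbC.
rewrite (@pcount_eq _ _ _ _ (r u) y); last by rewrite transp_rel -rel_r -transp_rel.
rewrite /pcount -(card_preimset _ r_inj).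
by apply: eq_card => v; rewrite !inE rel_transp rel_r andbC.
Qed.

Lemma card_col_relabel v a b :
  #|[set u in fiber x a | rel u v == b]| =
  #|[set u in fiber x a | rel (r u) (r v) == b]|.
Proof.
transitivity (pcount rel a b x v); first by apply: eq_card => u; rewrite !inE.
rewrite (@pcount_eq _ _ _ _ y (r v)) ?rel_r // /pcount -(card_preimset _ r_inj).
by apply: eq_card => u; rewrite !inE rel_r.
Qed.

Lemma relabel_agree_or_complement a b c :
  (#|fiber x a| <= 2)%N -> (#|fiber x c| <= 2)%N ->
  {in fiber x a & fiber x c, forall u v, (rel (r u) (r v) == b) = (rel u v == b)} \/
  {in fiber x a & fiber x c, forall u v, (rel (r u) (r v) == b) = ~~ (rel u v == b)}.
Proof.
move=> thin_a thin_c; apply: agree_or_complement_card_le2 => // [u _|v _].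
- exact: card_row_relabel.
- exact: card_col_relabel.
Qed.

End Relabeling.

Variable F : fieldType.
Local Notation adj := (adjmx rel F).
Local Notation dual := (dualidem rel F).

Lemma mul_dualidem_mx z a (A : 'M[F]_#|X|) i j :
  (dual z a *m A) i j = (rel z (enum_val i) == a)%:R * A i j.
Proof.
rewrite !mxE (bigD1 i) //= big1 ?addr0 => [|k /negbTE k_neq_i]; rewrite !mxE ?eqxx //.
by rewrite eq_sym k_neq_i mul0r.
Qed.

Lemma mul_mx_dualidem z a (A : 'M[F]_#|X|) i j :
  (A *m dual z a) i j = A i j * (rel z (enum_val j) == a)%:R.
Proof.
rewrite !mxE (bigD1 j) //= big1 ?addr0 => [|k /negbTE k_neq_j]; rewrite !mxE ?eqxx //.
by rewrite k_neq_j mulr0.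
Qed.

Lemma sum_indicator (e : 'I_d.+1) : \sum_a ((e == a)%:R : F) = 1.
Proof.
by rewrite (bigD1 e) //= eqxx big1 ?addr0 // => a /negbTE; rewrite eq_sym => ->.
Qed.

Lemma sum_dualidem z : \sum_a dual z a = 1%:M.
Proof.
apply/matrixP => i j; rewrite summxE !mxE.
have [<-|/negbTE i_neq_j] := eqVneq i j; last by rewrite big1 // => a _; rewrite mxE i_neq_j.
by rewrite -(sum_indicator (rel z (enum_val i))); apply: eq_bigr => a _; rewrite mxE eqxx.
Qed.

Lemma sum_adjmx : \sum_a adj a = const_mx 1.
Proof.
apply/matrixP => i j; rewrite summxE mxE.
by rewrite -(sum_indicator (rel (enum_val i) (enum_val j))); apply: eq_bigr => a _; rewrite mxE.
Qed.

Lemma adjmx_terwilliger z b : terwilliger rel F z (adj b).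
Proof. by apply: ga_gen; exists b; left. Qed.

Lemma dualidem_terwilliger z a : terwilliger rel F z (dual z a).
Proof. by apply: ga_gen; exists a; right. Qed.

Lemma const1_terwilliger z : terwilliger rel F z (const_mx 1).
Proof. by rewrite -sum_adjmx; apply: gen_alg_sum => b; apply: adjmx_terwilliger. Qed.

Section TerwilligerConjugation.
Variables (x y : X) (s : 'S_#|X|).
Hypotheses (rel_s : forall i, rel y (enum_val (s i)) = rel x (enum_val i))
           (thin_x : forall a, (#|fiber x a| <= 2)%N).

Lemma perm_conjmx_dualidem a : perm_conjmx s (dual y a) = dual x a.
Proof. by apply/matrixP => i j; rewrite perm_conjmxE !mxE (inj_eq perm_inj) rel_s. Qed.

Lemma dualidem_perm_conjmx_adjmx a b c :
  dual x a *m perm_conjmx s (adj b) *m dual x c = dual x a *m adj b *m dual x c \/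
  dual x a *m perm_conjmx s (adj b) *m dual x c = dual x a *m (const_mx 1 - adj b) *m dual x c.
Proof.
pose r v := enum_val (s (enum_rank v)).
have r_inj : injective r by move=> u v /enum_val_inj/perm_inj/enum_rank_inj.
have rel_r v : rel y (r v) = rel x v by rewrite rel_s enum_rankK.
have r_enum i : enum_val (s i) = r (enum_val i) by rewrite /r enum_valK.
have [relabel|relabel] := relabel_agree_or_complement r_inj rel_r b (thin_x a) (thin_x c);
  [left|right]; apply/matrixP => i j;
  rewrite !mul_mx_dualidem !mul_dualidem_mx perm_conjmxE !mxE !r_enum;
  case ia: (rel x (enum_val i) == a); case jc: (rel x (enum_val j) == c);
  rewrite ?mul0r ?mulr0 // !mul1r !mulr1 relabel ?inE //.
by case: (rel _ _ == b); rewrite ?subrr ?subr0.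
Qed.

Lemma perm_conjmx_adjmx_terwilliger b : terwilliger rel F x (perm_conjmx s (adj b)).
Proof.
rewrite -[perm_conjmx _ _]mul1mx -[_ *m _]mulmx1 -(sum_dualidem x) !mulmx_suml.
apply: gen_alg_sum => a; rewrite mulmx_sumr; apply: gen_alg_sum => c.
have [->|->] := dualidem_perm_conjmx_adjmx a b c;
  do 2?apply: ga_mul; try exact: dualidem_terwilliger.
- exact: adjmx_terwilliger.
- rewrite -scaleN1r; apply/ga_add/ga_scale; first exact: const1_terwilliger.
  exact: adjmx_terwilliger.
Qed.

Lemma perm_conjmx_terwilliger A : terwilliger rel F y A -> terwilliger rel F x (perm_conjmx s A).
Proof.
apply: gen_alg_perm_conjmx => _ [e [->|->]]; first exact: perm_conjmx_adjmx_terwilliger.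
by rewrite perm_conjmx_dualidem; apply: dualidem_terwilliger.
Qed.

End TerwilligerConjugation.
End Scheme.

Theorem theoremD (X : finType) (d : nat) (rel : X -> X -> 'I_d.+1)
  (F : fieldType) (x : X) :
  is_scheme rel -> quasi_thin rel x ->
  forall y : X, alg_iso (terwilliger rel F y) (terwilliger rel F x).
Proof.
move=> rel_scheme thin_x y.
have thin z a : (#|fiber rel z a| <= 2)%N := quasi_thin_fiber rel_scheme z a thin_x.
have [s rel_s] : exists s : 'S_#|X|, forall i, rel y (enum_val (s i)) = rel x (enum_val i).
  by apply: perm_fibers => a; rewrite -!/(fiber rel _ a) !(card_fiber rel_scheme x).
have rel_sV i : rel x (enum_val ((s^-1)%g i)) = rel y (enum_val i) by rewrite -rel_s permKV.
apply: (alg_iso_perm_conjmx (s := s)) => A.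
- exact: (perm_conjmx_terwilliger rel_scheme rel_s (thin x)).
- exact: (perm_conjmx_terwilliger rel_scheme rel_sV (thin y)).
Qed.
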